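(* Let $\mathbf A\in\mathbb R^{m\times n}$ be a nonzero matrix of rank $r$ (full column rank or rank deficient) with smallest nonzero singular value $\sigma_r(\mathbf A)$, and let $\mathbf b\in\mathbb R^m$ be such that $\mathbf A\mathbf x=\mathbf b$ is consistent. Fix a row partition $\{\mathcal I_1,\dots,\mathcal I_s\}$ of $[m]$ and a column partition $\{\mathcal J_1,\dots,\mathcal J_t\}$ of $[n]$, let $\beta=\max_{(\mathcal I,\mathcal J)\in\mathcal P}\|\mathbf A_{\mathcal I,\mathcal J}\|_2^2/\|\mathbf A_{\mathcal I,\mathcal J}\|_F^2$ and $\rho=\max_{1\le j\le t}\sigma_1^2(\mathbf A_{:,\mathcal J_j})$. Let $\mathbf x^0\in\mathbb R^n$ be arbitrary and let $\mathbf x^k$ be the $k$th iterate of the doubly stochastic block Gauss--Seidel (DSBGS) algorithm with step size $\alpha$ described in the context. Then: (i) if $t=n$ and $0<\alpha<2\sigma_r^2(\mathbf A)/(\beta\|\mathbf A\|_F^2)$, then for every $k\ge0$ $$\mathbb E\big[\|\mathbf A\mathbf x^k-\mathbf b\|_2^2\big]\le\Big(1+\beta\alpha^2-\frac{2\alpha\sigma_r^2(\mathbf A)}{\|\mathbf A\|_F^2}\Big)^k\|\mathbf A\mathbf x^0-\mathbf b\|_2^2;$$ (ii) if $t<n$ and $0<\alpha<2\sigma_r^2(\mathbf A)/(t\rho\beta)$, then for every $k\ge0$ $$\mathbb E\big[\|\mathbf A\mathbf x^k-\mathbf b\|_2^2\big]\le\Big(1-\frac{2\alpha\sigma_r^2(\mathbf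 A)-t\rho\beta\alpha^2}{\|\mathbf A\|_F^2}\Big)^k\|\mathbf A\mathbf x^0-\mathbf b\|_2^2.$$
   Context: Notation: $\|\cdot\|_F$ the Frobenius norm, $\|\cdot\|_2$ the Euclidean norm for vectors and spectral norm for matrices, $\sigma_1(\cdot)$ the largest singular value. For $\mathcal I\subseteq[m]=\{1,\dots,m\}$ and $\mathcal J\subseteq[n]$, $\mathbf A_{\mathcal I,\mathcal J}$ is the submatrix of $\mathbf A$ with rows indexed by $\mathcal I$ and columns indexed by $\mathcal J$; $\mathbf A_{:,\mathcal J}$ is the column submatrix indexed by $\mathcal J$; $\mathbf I_{:,\mathcal J}$ denotes the columns of the identity matrix (of the appropriate order) indexed by $\mathcal J$. DSBGS algorithm: the sets $\mathcal I_1,\dots,\mathcal I_s$ are nonempty, pairwise disjoint with union $[m]$, and $\mathcal J_1,\dots,\mathcal J_t$ are nonempty, pairwise disjoint with union $[n]$; $\mathcal P=\{\mathcal I_1,\dots,\mathcal I_s\}\times\{\mathcal J_1,\dots,\mathcal J_t\}$ (in the definition of $\beta$ the maximum is over blocks with $\mathbf A_{\mathcal I,\mathcal J}\neq0$). Given $\alpha>0$ and $\mathbf x^0$, for $k=1,2,\dots$: pick $(\mathcal I,\mathcal J)\in\mathcal P$ (independently of previous choices) with probability $\|\mathbf A_{\mathcal I,\mathcal J}\|_F^2/\|\mathbf A\|_F^2$, and set $$\mathbf x^k=\mathbf x^{k-1}-\alpha\,\frac{\mathbf I_{:,\mathcal J}(\mathbf A_{\mathcal I,\mathcal J})^{T}(\mathbf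 I_{:,\mathcal I})^{T}}{\|\mathbf A_{\mathcal I,\mathcal J}\|_F^2}\,(\mathbf A\mathbf x^{k-1}-\mathbf b).$$ The expectation $\mathbb E$ is over the random choices of the blocks. *)

From HB Require Import structures.
From mathcomp Require Import all_boot all_order all_algebra.
From mathcomp Require Import classical_sets reals.
Set Implicit Arguments. Unset Strict Implicit. Unset Printing Implicit Defensive.
Import Order.TTheory GRing.Theory Num.Theory.
Local Open Scope ring_scope.
Local Open Scope classical_set_scope.

Section Defs.
Variable R : realType.

Definition vnorm2 (k : nat) (v : 'cV[R]_k) : R := \sum_i (v i 0) ^+ 2.

Definition frob2 (p q : nat) (M : 'M[R]_(p, q)) : R :=
  \sum_i \sum_j (M i j) ^+ 2.

Definition sqsingvals (p q : nat) (M : 'M[R]_(p, q)) : set R :=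
  [set l | root (char_poly (M^T *m M)) l].

Definition sigma1sq (p q : nat) (M : 'M[R]_(p, q)) : R := sup (sqsingvals M).

Definition sigmarsq (p q : nat) (M : 'M[R]_(p, q)) : R :=
  inf [set l | sqsingvals M l /\ l != 0].

(* The block A_{I,J}, represented (with identical nonzero singular values and
   Frobenius norm) as the m x n matrix equal to A on I x J and 0 elsewhere;
   in particular I_{:,J} A_{I,J}^T I_{:,I}^T = (blk I J A)^T. *)
Definition blk (m n : nat) (I : {set 'I_m}) (J : {set 'I_n}) (A : 'M[R]_(m, n))
  : 'M[R]_(m, n) :=
  \matrix_(i, j) (if (i \in I) && (j \in J) then A i j else 0).

Definition colblk (m n : nat) (J : {set 'I_n}) (A : 'M[R]_(m, n)) : 'M[R]_(m, n) :=
  blk [set: 'I_m] J A.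

Definition dsbgs_step (m n : nat) (A : 'M[R]_(m, n)) (b : 'cV[R]_m) (alpha : R)
  (I : {set 'I_m}) (J : {set 'I_n}) (x : 'cV[R]_n) : 'cV[R]_n :=
  x - (alpha / frob2 (blk I J A)) *: ((blk I J A)^T *m (A *m x - b)).

Definition blkprob (m n : nat) (A : 'M[R]_(m, n)) (I : {set 'I_m}) (J : {set 'I_n})
  : R := frob2 (blk I J A) / frob2 A.

(* dsbgs_expect k x f = E[f(x^k)] where x^0 = x and the blocks are chosen
   i.i.d. from PI x PJ with the probabilities above (expectation of a
   function of the k-step Markov chain, expanded over the first choice). *)
Fixpoint dsbgs_expect (m n : nat) (A : 'M[R]_(m, n)) (b : 'cV[R]_m) (alpha : R)
  (PI : {set {set 'I_m}}) (PJ : {set {set 'I_n}}) (k : nat)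
  (x : 'cV[R]_n) (f : 'cV[R]_n -> R) : R :=
  match k with
  | 0%N => f x
  | k'.+1 => \sum_(I in PI) \sum_(J in PJ)
               blkprob A I J * dsbgs_expect A b alpha PI PJ k'
                                 (dsbgs_step A b alpha I J x) f
  end.

(* beta = max over blocks with A_{I,J} <> 0 of ||A_{I,J}||_2^2/||A_{I,J}||_F^2
   (all ratios are nonnegative, so 0 is a neutral starting value) *)
Definition dsbgs_beta (m n : nat) (A : 'M[R]_(m, n))
  (PI : {set {set 'I_m}}) (PJ : {set {set 'I_n}}) : R :=
  \big[Num.max/0]_(I in PI) \big[Num.max/0]_(J in PJ | blk I J A != 0)
     (sigma1sq (blk I J A) / frob2 (blk I J A)).

Definition dsbgs_rho (m n : nat) (A : 'M[R]_(m, n)) (PJ : {set {set 'I_n}}) : R :=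
  \big[Num.max/0]_(J in PJ) sigma1sq (colblk J A).

End Defs.

(* Write r = A x - b and let B = A_{I,J} (zero-padded) be the chosen block. One step
   gives r' = r - (alpha / ||B||_F^2) A B^T r, and since the blocks sum to A and their
   squared Frobenius norms to ||A||_F^2, averaging over the blocks yields
     E ||r'||^2 = ||r||^2 - (2 alpha / ||A||_F^2) ||A^T r||^2 + (alpha^2 / ||A||_F^2) G(r),
   with G(r) = sum_{I,J} ||A B^T r||^2 / ||B||_F^2. As A x_s = b, r = A (x - x_s) lies in
   the range of A, so the spectral theorem for A^T A gives ||A^T r||^2 >= sigma_r^2 ||r||^2.
   Only the columns J of A act on B^T r = B^T r_I, so each term of G is at most
   ||A_{:,J}||_2^2 beta ||r_I||^2; bounding ||A_{:,J}||_2^2 by ||A_{:,J}||_F^2, resp. by rho,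
   gives G(r) <= beta ||A||_F^2 ||r||^2, resp. G(r) <= t rho beta ||r||^2. The resulting
   one-step contraction of E ||r||^2 iterates along the chain of block choices. *)

From mathcomp Require Import all_boot all_order all_algebra.
From mathcomp Require Import boolp reals complex.
From mathcomp Require Import ring lra.
Import Order.TTheory GRing.Theory Num.Theory.
Local Open Scope ring_scope.
Set Implicit Arguments. Unset Strict Implicit. Unset Printing Implicit Defensive.

Lemma sum_mulr_sqr_le (R : realDomainType) (I : finType) (a b : I -> R) :
  (\sum_i a i * b i) ^+ 2 <= (\sum_i a i ^+ 2) * (\sum_i b i ^+ 2).
Proof.
set p := \sum_i a i * b i; set sa := \sum_i a i ^+ 2; set sb := \sum_i b i ^+ 2.
have sb_ge0 : 0 <= sb by apply: sumr_ge0 => i _; exact: sqr_ge0.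
have [sb0|sb_neq0] := eqVneq sb 0.
  have b0 i : b i = 0.
    apply/eqP; rewrite -sqrf_eq0; apply/eqP.
    by apply: (psumr_eq0P _ sb0) => // j _; exact: sqr_ge0.
  rewrite /p big1 ?expr0n ?sb0 ?mulr0 // => i _.
  by rewrite b0 mulr0.
have sb_gt0 : 0 < sb by rewrite lt_def sb_neq0 sb_ge0.
have : 0 <= \sum_i (sb * a i - p * b i) ^+ 2 by apply: sumr_ge0 => i _; exact: sqr_ge0.
have -> : \sum_i (sb * a i - p * b i) ^+ 2 = sb * (sa * sb - p ^+ 2).
  transitivity (\sum_i (sb ^+ 2 * a i ^+ 2 - 2 * sb * p * (a i * b i) + p ^+ 2 * b i ^+ 2)).
    by apply: eq_bigr => i _; ring.
  rewrite big_split sumrB /= -!mulr_sumr -/sa -/p -/sb; ring.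
by rewrite pmulr_rge0 // subr_ge0.
Qed.

Section Spectral.
Variable R : rcfType.
Local Notation C := R[i].
Local Notation toC := (real_complex R).
Local Open Scope sesquilinear_scope.

Lemma real_complex_real (x : R) : toC x \is Num.real.
Proof. by rewrite realE !lecR le_total. Qed.

Lemma real_complexRe (z : C) : z \is Num.real -> toC (complex.Re z) = z.
Proof. by move=> zr; rewrite (complexRe z); apply/Creal_ReP. Qed.

Lemma map_mxX n (S : 'M[R]_n) k : map_mx toC (S ^+ k) = map_mx toC S ^+ k.
Proof.
elim: k => [|k IHk]; first by rewrite !expr0 -!idmxE map_mx1.
by rewrite !exprSr -!mulmxE map_mxM IHk.
Qed.

Lemma unitary_conj_diag_expr n (P : 'M[C]_n) (D : 'rV[C]_n) k :
  P \is unitarymx ->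
  (P^t* *m diag_mx D *m P) ^+ k = P^t* *m diag_mx (\row_i D 0 i ^+ k) *m P.
Proof.
move=> Pu; have PPt : P *m P^t* = 1%:M by apply/unitarymxP.
have PtP : P^t* *m P = 1%:M by rewrite -invmx_unitary // mulVmx ?unitarymx_unit.
elim: k => [|k IHk].
  rewrite expr0 -idmxE (_ : \row_i _ = const_mx 1); last by apply/rowP => i; rewrite !mxE.
  by rewrite diag_const_mx mulmx1 PtP.
rewrite exprSr -mulmxE IHk !mulmxA -(mulmxA _ P) PPt mulmx1.
rewrite -(mulmxA _ (diag_mx _) (diag_mx D)) mulmx_diag.
by congr (_ *m diag_mx _ *m _); apply/rowP => i; rewrite !mxE exprSr.
Qed.

Lemma sym_quadform_spectral n (S : 'M[R]_n) : S^T = S ->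
  exists d : 'I_n -> R, (forall i, root (char_poly S) (d i)) /\
    forall v : 'rV[R]_n, exists2 c : 'I_n -> R, (forall i, 0 <= c i) &
      forall k, (v *m S ^+ k *m v^T) 0 0 = \sum_i d i ^+ k * c i.
Proof.
move=> symS; pose Sc := map_mx toC S.
have Sc_herm : Sc \is hermsymmx.
  apply: realsym_hermsym.
    apply/is_hermitianmxP; rewrite expr0 scale1r; apply/matrixP => i j.
    by rewrite !mxE -[in LHS]symS mxE.
  by apply/mxOverP => i j; rewrite mxE real_complex_real.
have /orthomx_spectralP Sc_diag := hermitian_normalmx Sc_herm.
set P := spectralmx Sc in Sc_diag; set D := spectral_diag Sc in Sc_diag.
have P_unitary : P \is unitarymx := spectral_unitarymx Sc.
have PPt : P *m P^t* = 1%:M by apply/unitarymxP.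
rewrite (invmx_unitary P_unitary) in Sc_diag.
pose d i := complex.Re (D 0 i).
have dE i : toC (d i) = D 0 i.
  by apply: real_complexRe; exact: (mxOverP (hermitian_spectral_diag_real Sc_herm) 0 i).
exists d; split.
  move=> i; rewrite -(fmorph_root toC) map_char_poly -eigenvalue_root_char /= dE.
  change (eigenvalue Sc (D 0 i)); apply/eigenvalueP; exists (delta_mx 0 i *m P).
    rewrite Sc_diag !mulmxA -(mulmxA _ P) PPt mulmx1 scalemxAl; congr (_ *m _).
    apply/matrixP => a b; rewrite mul_mx_diag !mxE ord1 eqxx /=.
    by case: (b =P i) => [->|_]; rewrite ?mulr1 ?mul1r ?mulr0 ?mul0r.
  apply/negP => /eqP /(congr1 (mulmx^~ (P^t*))); rewrite -mulmxA PPt mulmx1 mul0mx.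
  by move/matrixP => /(_ 0 i); rewrite !mxE !eqxx => /eqP; rewrite oner_eq0.
move=> v; pose w := map_mx toC v *m P^t*.
have wc i : w 0 i * (w 0 i)^* \is Num.real by apply/ger0_real/mul_conjC_ge0.
exists (fun i => complex.Re (w 0 i * (w 0 i)^*)).
  by move=> i; rewrite -lecR real_complexRe ?mul_conjC_ge0.
move=> k; apply: complexI; rewrite rmorph_sum /=.
under eq_bigr => i _ do rewrite rmorphM /= rmorphXn /= dE real_complexRe //.
have vT : (map_mx toC v)^T = (map_mx toC v)^t*.
  by apply/matrixP => a b; rewrite !mxE conj_Creal ?real_complex_real.
have wT : w^t* = P *m (map_mx toC v)^t* by rewrite /w trmx_mul map_mxM trmxCK.
have -> : toC ((v *m S ^+ k *m v^T) 0 0) = map_mx toC (v *m S ^+ k *m v^T) 0 0.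
  by rewrite [RHS]mxE.
rewrite !map_mxM -map_trmx map_mxX -/Sc Sc_diag unitary_conj_diag_expr // vT.
rewrite !mulmxA -/w -(mulmxA _ P) -wT mul_mx_diag mxE.
by apply: eq_bigr => i _; rewrite !mxE; ring.
Qed.

End Spectral.

Section Norms.
Variable R : realType.

Definition vdot k (u v : 'cV[R]_k) : R := \sum_i u i 0 * v i 0.

Lemma vdotE k (u v : 'cV[R]_k) : vdot u v = (u^T *m v) 0 0.
Proof. by rewrite mxE; apply: eq_bigr => i _; rewrite mxE. Qed.

Lemma vnorm2E k (u : 'cV[R]_k) : vnorm2 u = (u^T *m u) 0 0.
Proof. by rewrite mxE; apply: eq_bigr => i _; rewrite mxE expr2. Qed.

Lemma vnorm2_ge0 k (u : 'cV[R]_k) : 0 <= vnorm2 u.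
Proof. by apply: sumr_ge0 => i _; exact: sqr_ge0. Qed.

Lemma vnorm2_eq0 k (u : 'cV[R]_k) : (vnorm2 u == 0) = (u == 0).
Proof.
apply/eqP/eqP => [u0|->]; last by rewrite /vnorm2 big1 // => i _; rewrite mxE expr0n.
apply/matrixP => i j; rewrite mxE ord1; apply/eqP; rewrite -sqrf_eq0; apply/eqP.
by apply: (psumr_eq0P _ u0) => // l _; exact: sqr_ge0.
Qed.

Lemma frob2_ge0 p q (M : 'M[R]_(p, q)) : 0 <= frob2 M.
Proof. by apply: sumr_ge0 => i _; apply: sumr_ge0 => j _; exact: sqr_ge0. Qed.

Lemma frob2_eq0 p q (M : 'M[R]_(p, q)) : (frob2 M == 0) = (M == 0).
Proof.
apply/eqP/eqP => [M0|->]; last first.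
  by rewrite /frob2 big1 // => i _; rewrite big1 // => j _; rewrite mxE expr0n.
apply/matrixP => i j; rewrite mxE; apply/eqP; rewrite -sqrf_eq0; apply/eqP.
have Mi0 : \sum_j M i j ^+ 2 = 0.
  by apply: (psumr_eq0P _ M0) => // l _; apply: sumr_ge0 => l' _; exact: sqr_ge0.
by apply: (psumr_eq0P _ Mi0) => // l _; exact: sqr_ge0.
Qed.

Lemma vnorm20 k : vnorm2 (0 : 'cV[R]_k) = 0.
Proof. by apply/eqP; rewrite vnorm2_eq0. Qed.

Lemma frob20 p q : frob2 (0 : 'M[R]_(p, q)) = 0.
Proof. by apply/eqP; rewrite frob2_eq0. Qed.

Lemma vdotr0 k (u : 'cV[R]_k) : vdot u 0 = 0.
Proof. by rewrite vdotE mulmx0 mxE. Qed.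

Lemma frob2_gt0 p q (M : 'M[R]_(p, q)) : (0 < frob2 M) = (M != 0).
Proof. by rewrite lt_def frob2_eq0 frob2_ge0 andbT. Qed.

Lemma vnorm2_subZ k (r u : 'cV[R]_k) (g : R) :
  vnorm2 (r - g *: u) = vnorm2 r - 2 * g * vdot r u + g ^+ 2 * vnorm2 u.
Proof.
rewrite /vnorm2 /vdot !mulr_sumr -sumrB -big_split /=.
by apply: eq_bigr => i _; rewrite !mxE; ring.
Qed.

Lemma vdot_sqr_le k (u v : 'cV[R]_k) : vdot u v ^+ 2 <= vnorm2 u * vnorm2 v.
Proof. exact: sum_mulr_sqr_le. Qed.

Lemma vnorm2_mul_le_frob2 p q (M : 'M[R]_(p, q)) (v : 'cV[R]_q) :
  vnorm2 (M *m v) <= frob2 M * vnorm2 v.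
Proof.
rewrite /vnorm2 /frob2 mulr_suml; apply: ler_sum => i _.
by rewrite mxE; exact: (sum_mulr_sqr_le (M i) (v^~ 0)).
Qed.

End Norms.

Section SingularValues.
Variable R : realType.

Lemma sqsingvals_ge0 p q (M : 'M[R]_(p, q)) l : sqsingvals M l -> 0 <= l.
Proof.
rewrite /sqsingvals /= -eigenvalue_root_char => /eigenvalueP [v Mv v_neq0].
have : 0 <= vnorm2 (M *m v^T) by exact: vnorm2_ge0.
have vT_gt0 : 0 < vnorm2 v^T by rewrite lt_def vnorm2_eq0 trmx_eq0 v_neq0 vnorm2_ge0.
rewrite vnorm2E trmx_mul trmxK !mulmxA -(mulmxA v) Mv -scalemxAl mxE.
by rewrite vnorm2E trmxK in vT_gt0; rewrite pmulr_lge0.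
Qed.

Lemma sqsingvals_le_sigma1sq p q (M : 'M[R]_(p, q)) l :
  sqsingvals M l -> l <= sigma1sq M.
Proof.
apply: ub_le_sup.
have [c Hc] := Cauchy_root_bound (monic_neq0 (char_poly_monic (M^T *m M))).
by exists c => x /Hc; apply: le_trans (ler_norm x).
Qed.

Lemma sigma1sq_ge0 p q (M : 'M[R]_(p, q)) : 0 <= sigma1sq M.
Proof.
have [[l Ml]|no_sv] := pselect (exists l, sqsingvals M l).
  exact: le_trans (sqsingvals_ge0 Ml) (sqsingvals_le_sigma1sq Ml).
by rewrite /sigma1sq sup_out // => -[[l Ml] _]; apply: no_sv; exists l.
Qed.

Lemma sigmarsq_le_sqsingvals p q (M : 'M[R]_(p, q)) l :
  sqsingvals M l -> l != 0 -> sigmarsq M <= l.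
Proof.
move=> Ml l_neq0; apply: ge_inf; last by split.
by exists 0 => x [Mx _]; exact: sqsingvals_ge0 Mx.
Qed.

Lemma gram_moments p q (M : 'M[R]_(p, q)) :
  exists d : 'I_q -> R, (forall i, sqsingvals M (d i)) /\
    forall v : 'cV[R]_q, exists2 c : 'I_q -> R, (forall i, 0 <= c i) &
      [/\ vnorm2 v = \sum_i c i, vnorm2 (M *m v) = \sum_i d i * c i
        & vnorm2 (M^T *m (M *m v)) = \sum_i d i ^+ 2 * c i].
Proof.
have [|d [Md moments]] := @sym_quadform_spectral _ _ (M^T *m M).
  by rewrite trmx_mul trmxK.
exists d; split=> // v; have [c c_ge0 Ec] := moments v^T.
exists c => //; split.
- transitivity (\sum_i d i ^+ 0 * c i); last by apply: eq_bigr => i _; rewrite mul1r.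
  by rewrite -Ec trmxK expr0 -idmxE mulmx1 vnorm2E.
- transitivity (\sum_i d i ^+ 1 * c i); last by [].
  by rewrite -Ec trmxK expr1 vnorm2E trmx_mul !mulmxA.
- rewrite -Ec trmxK expr2 -mulmxE vnorm2E !trmx_mul trmxK !mulmxA.
  by rewrite -!(mulmxA (v^T *m M^T *m M)).
Qed.

Lemma vnorm2_mul_le_sigma1sq p q (M : 'M[R]_(p, q)) (v : 'cV[R]_q) :
  vnorm2 (M *m v) <= sigma1sq M * vnorm2 v.
Proof.
have [d [Md moments]] := gram_moments M; have [c c_ge0 [-> -> _]] := moments v.
rewrite mulr_sumr; apply: ler_sum => i _.
by apply: ler_wpM2r => //; exact: sqsingvals_le_sigma1sq.
Qed.

Lemma sigmarsq_mul_vnorm2_le p q (M : 'M[R]_(p, q)) (v : 'cV[R]_q) :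
  sigmarsq M * vnorm2 (M *m v) <= vnorm2 (M^T *m (M *m v)).
Proof.
have [d [Md moments]] := gram_moments M; have [c c_ge0 [_ -> ->]] := moments v.
rewrite mulr_sumr; apply: ler_sum => i _.
have [->|d_neq0] := eqVneq (d i) 0; first by rewrite !mul0r expr0n /= mul0r mulr0.
rewrite expr2 -mulrA; apply: ler_wpM2r; first by rewrite mulr_ge0 // (sqsingvals_ge0 (Md i)).
exact: sigmarsq_le_sqsingvals.
Qed.

(* ||M^T r||^4 = <r, M (M^T r)>^2 <= ||r||^2 ||M (M^T r)||^2 <= ||r||^2 sigma_1^2 ||M^T r||^2 *)
Lemma vnorm2_trmx_mul_le_sigma1sq p q (M : 'M[R]_(p, q)) (r : 'cV[R]_p) :
  vnorm2 (M^T *m r) <= sigma1sq M * vnorm2 r.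
Proof.
set w := M^T *m r.
have w_dot : vnorm2 w = vdot r (M *m w) by rewrite vnorm2E vdotE trmx_mul trmxK !mulmxA.
have [w0|w_neq0] := eqVneq (vnorm2 w) 0.
  by rewrite w0 mulr_ge0 ?sigma1sq_ge0 ?vnorm2_ge0.
have w_gt0 : 0 < vnorm2 w by rewrite lt_def w_neq0 vnorm2_ge0.
rewrite -(ler_pM2r w_gt0); apply: le_trans (_ : vnorm2 r * (sigma1sq M * vnorm2 w) <= _).
  rewrite -expr2 {1}w_dot; apply: le_trans (vdot_sqr_le _ _) _.
  by apply: ler_wpM2l; [exact: vnorm2_ge0 | exact: vnorm2_mul_le_sigma1sq].
by rewrite mulrCA mulrA.
Qed.

End SingularValues.

Section Partitions.
Variables (V : nmodType) (T : finType) (P : {set {set T}}).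
Hypothesis P_part : partition P [set: T].

Lemma big_partition_mem x (a : V) : \sum_(X in P) (if x \in X then a else 0) = a.
Proof.
case/and3P: P_part => /eqP P_cover P_triv _.
have x_cover : x \in cover P by rewrite P_cover inE.
rewrite (bigD1 (pblock P x)) ?pblock_mem //= mem_pblock x_cover big1 ?addr0 //.
move=> X /andP [XP X_neq]; case: ifP => // xX.
by move: X_neq; rewrite (def_pblock P_triv XP xX) eqxx.
Qed.

Lemma big_partition (F : T -> V) : \sum_(X in P) \sum_(x in X) F x = \sum_x F x.
Proof. by rewrite -(set_partition_big _ P_part); apply: eq_bigl => x; rewrite inE. Qed.

End Partitions.

Section Blocks.
Variable R : realType.

Definition rowmask k (I : {set 'I_k}) (r : 'cV[R]_k) : 'cV[R]_k :=
  \col_i (if i \in I then r i 0 else 0).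

Lemma vnorm2_rowmask k (I : {set 'I_k}) (r : 'cV[R]_k) :
  vnorm2 (rowmask I r) = \sum_(i in I) r i 0 ^+ 2.
Proof.
by rewrite /vnorm2 [RHS]big_mkcond; apply: eq_bigr => i _; rewrite mxE; case: ifP; rewrite ?expr0n.
Qed.

Lemma sum_vnorm2_rowmask k (P : {set {set 'I_k}}) (r : 'cV[R]_k) :
  partition P [set: 'I_k] -> \sum_(I in P) vnorm2 (rowmask I r) = vnorm2 r.
Proof. by move=> P_part; under eq_bigr do rewrite vnorm2_rowmask; rewrite big_partition. Qed.

Variables (m n : nat) (PI : {set {set 'I_m}}) (PJ : {set {set 'I_n}}).
Hypotheses (PI_part : partition PI [set: 'I_m]) (PJ_part : partition PJ [set: 'I_n]).
Implicit Types (A B : 'M[R]_(m, n)) (I : {set 'I_m}) (J : {set 'I_n}).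

Lemma frob2_blk I J A : frob2 (blk I J A) = \sum_(i in I) \sum_(j in J) A i j ^+ 2.
Proof.
rewrite /frob2 [RHS]big_mkcond; apply: eq_bigr => i _ /=.
case: ifP => iI; last by rewrite big1 // => j _; rewrite mxE iI expr0n.
by rewrite [RHS]big_mkcond; apply: eq_bigr => j _; rewrite mxE iI /=; case: ifP; rewrite ?expr0n.
Qed.

Lemma sum_frob2_blk A : \sum_(I in PI) \sum_(J in PJ) frob2 (blk I J A) = frob2 A.
Proof.
under eq_bigr do under eq_bigr do rewrite frob2_blk.
under eq_bigr do rewrite exchange_big /=.
rewrite big_partition //; apply: eq_bigr => i _; exact: big_partition.
Qed.

Lemma sum_frob2_colblk A : \sum_(J in PJ) frob2 (colblk J A) = frob2 A.
Proof.
under eq_bigr do rewrite /colblk frob2_blk.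
rewrite exchange_big /frob2; apply: eq_big => [i|i _]; [by rewrite in_setT | exact: big_partition].
Qed.

Lemma sum_blk A : \sum_(I in PI) \sum_(J in PJ) blk I J A = A.
Proof.
apply/matrixP => i j; rewrite summxE.
under eq_bigr do rewrite summxE; under eq_bigr do under eq_bigr do rewrite mxE.
rewrite -[RHS](big_partition_mem PI_part i (A i j)); apply: eq_bigr => I _.
by case: (i \in I); [exact: big_partition_mem | rewrite big1].
Qed.

Lemma trmx_blk_mul_rowmask I J A (r : 'cV[R]_m) :
  (blk I J A)^T *m r = (blk I J A)^T *m rowmask I r.
Proof.
apply/matrixP => j k; rewrite !mxE; apply: eq_bigr => i _; rewrite !mxE ord1.
by case: ifP => [/andP [-> _]|_]; rewrite ?mul0r.
Qed.

Lemma mul_trmx_blk_colblk I J A B (r : 'cV[R]_m) :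
  A *m ((blk I J B)^T *m r) = colblk J A *m ((blk I J B)^T *m r).
Proof.
apply/matrixP => i k; rewrite !mxE; apply: eq_bigr => j _; rewrite !mxE in_setT /=.
case jJ : (j \in J) => //; rewrite big1 ?mulr0 // => l _.
by rewrite !mxE jJ andbF mul0r.
Qed.

Lemma sum_vdot_blk A (r : 'cV[R]_m) :
  \sum_(I in PI) \sum_(J in PJ) vdot r (A *m ((blk I J A)^T *m r)) = vnorm2 (A^T *m r).
Proof.
have sumT : A^T = \sum_(I in PI) \sum_(J in PJ) (blk I J A)^T.
  by rewrite -{1}(sum_blk A) raddf_sum; apply: eq_bigr => I _; rewrite raddf_sum.
rewrite vnorm2E trmx_mul trmxK sumT mulmx_suml mulmx_sumr summxE.
apply: eq_bigr => I _; rewrite mulmx_suml mulmx_sumr summxE.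
by apply: eq_bigr => J _; rewrite vdotE !mulmxA.
Qed.

Lemma blkprob_ge0 I J A : 0 <= blkprob A I J.
Proof. exact: divr_ge0 (frob2_ge0 _) (frob2_ge0 _). Qed.

Lemma dsbgs_beta_ge0 A : 0 <= dsbgs_beta A PI PJ.
Proof. exact: bigmax_ge_id. Qed.

Lemma dsbgs_rho_ge0 A : 0 <= dsbgs_rho A PJ.
Proof. exact: bigmax_ge_id. Qed.

Lemma sigma1sq_blk_le_beta I J A : I \in PI -> J \in PJ -> blk I J A != 0 ->
  sigma1sq (blk I J A) <= dsbgs_beta A PI PJ * frob2 (blk I J A).
Proof.
move=> PI_I PJ_J blk_neq0; rewrite -ler_pdivrMr ?frob2_gt0 //.
by apply: le_trans (le_bigmax_cond _ _ PI_I); apply: le_bigmax_cond; rewrite PJ_J.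
Qed.

Lemma sigma1sq_colblk_le_rho J A : J \in PJ -> sigma1sq (colblk J A) <= dsbgs_rho A PJ.
Proof. exact: le_bigmax_cond. Qed.

End Blocks.

Section OneStep.
Variables (R : realType) (m n : nat) (A : 'M[R]_(m, n)) (b : 'cV[R]_m) (alpha : R).
Variables (PI : {set {set 'I_m}}) (PJ : {set {set 'I_n}}).
Hypotheses (PI_part : partition PI [set: 'I_m]) (PJ_part : partition PJ [set: 'I_n]).

Local Notation resid x := (A *m x - b).
Local Notation step := (dsbgs_step A b alpha).
Local Notation beta := (dsbgs_beta A PI PJ).
Local Notation sqres := (fun y => vnorm2 (resid y)).

Definition blk_gain (r : 'cV[R]_m) : R :=
  \sum_(I in PI) \sum_(J in PJ) vnorm2 (A *m ((blk I J A)^T *m r)) / frob2 (blk I J A).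

Lemma resid_dsbgs_step I J x :
  resid (step I J x) = resid x - (alpha / frob2 (blk I J A)) *: (A *m ((blk I J A)^T *m resid x)).
Proof. by rewrite /dsbgs_step mulmxBr -scalemxAr addrAC. Qed.

Lemma blkprob_mul_vnorm2_resid_step I J x : A != 0 ->
  blkprob A I J * vnorm2 (resid (step I J x)) =
  vnorm2 (resid x) * (frob2 (blk I J A) / frob2 A)
  - 2 * (alpha / frob2 A) * vdot (resid x) (A *m ((blk I J A)^T *m resid x))
  + alpha ^+ 2 / frob2 A * (vnorm2 (A *m ((blk I J A)^T *m resid x)) / frob2 (blk I J A)).
Proof.
rewrite -frob2_eq0 => F_neq0; rewrite /blkprob.
have [blk0|blk_neq0] := eqVneq (blk I J A) 0.
  rewrite blk0 frob20 trmx0 mul0mx mulmx0 vdotr0 vnorm20.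
  by rewrite !(mul0r, mulr0, subr0, addr0).
have fB_neq0 : frob2 (blk I J A) != 0 by rewrite frob2_eq0.
by rewrite resid_dsbgs_step vnorm2_subZ; field; apply/andP.
Qed.

Lemma dsbgs_expect1_sqres x : A != 0 ->
  dsbgs_expect A b alpha PI PJ 1 x sqres
  = vnorm2 (resid x) - 2 * (alpha / frob2 A) * vnorm2 (A^T *m resid x)
    + alpha ^+ 2 / frob2 A * blk_gain (resid x).
Proof.
move=> A_neq0 /=; have F_neq0 : frob2 A != 0 by rewrite frob2_eq0.
under eq_bigr do under eq_bigr do rewrite blkprob_mul_vnorm2_resid_step //.
under eq_bigr do rewrite big_split sumrB /= -!mulr_sumr.
rewrite big_split sumrB /= -!mulr_sumr sum_vdot_blk //; congr (_ - _ + _).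
rewrite -[RHS]mulr1 -(divff F_neq0); congr (_ * _).
rewrite -[X in X / _](sum_frob2_blk PI_part PJ_part A).
by rewrite mulr_suml; apply: eq_bigr => I _; rewrite mulr_suml.
Qed.

Lemma blk_gain_term_le (X : R) I J r : I \in PI -> J \in PJ -> 0 <= X ->
  (forall w, vnorm2 (colblk J A *m w) <= X * vnorm2 w) ->
  vnorm2 (A *m ((blk I J A)^T *m r)) / frob2 (blk I J A) <= X * beta * vnorm2 (rowmask I r).
Proof.
move=> PI_I PJ_J X_ge0 colblk_le.
have [blk0|blk_neq0] := eqVneq (blk I J A) 0.
  by rewrite blk0 frob20 invr0 mulr0 !mulr_ge0 ?dsbgs_beta_ge0 ?vnorm2_ge0.
rewrite ler_pdivrMr ?frob2_gt0 // mul_trmx_blk_colblk.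
apply: le_trans (colblk_le _) _; rewrite -!mulrA; apply: ler_wpM2l => //.
rewrite trmx_blk_mul_rowmask; apply: le_trans (vnorm2_trmx_mul_le_sigma1sq _ _) _.
rewrite [_ * frob2 _]mulrC mulrA; apply: ler_wpM2r; first exact: vnorm2_ge0.
exact: sigma1sq_blk_le_beta.
Qed.

Lemma blk_gain_le (X : {set 'I_n} -> R) r :
  (forall J, J \in PJ -> 0 <= X J /\ forall w, vnorm2 (colblk J A *m w) <= X J * vnorm2 w) ->
  blk_gain r <= (\sum_(J in PJ) X J) * beta * vnorm2 r.
Proof.
move=> X_bound; rewrite -(sum_vnorm2_rowmask r PI_part) mulr_sumr.
apply: ler_sum => I PI_I; rewrite !mulr_suml; apply: ler_sum => J PJ_J.
by have [X_ge0 colblk_le] := X_bound J PJ_J; exact: blk_gain_term_le.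
Qed.

Lemma blk_gain_le_frob2 r : blk_gain r <= frob2 A * beta * vnorm2 r.
Proof.
rewrite -(sum_frob2_colblk PJ_part); apply: blk_gain_le => J _.
by split=> [|w]; [exact: frob2_ge0 | exact: vnorm2_mul_le_frob2].
Qed.

Lemma blk_gain_le_rho r : blk_gain r <= #|PJ|%:R * dsbgs_rho A PJ * beta * vnorm2 r.
Proof.
rewrite mulr_natl -sumr_const; apply: blk_gain_le => J PJ_J; split=> [|w].
  exact: dsbgs_rho_ge0.
apply: le_trans (vnorm2_mul_le_sigma1sq _ _) _; apply: ler_wpM2r; first exact: vnorm2_ge0.
exact: sigma1sq_colblk_le_rho.
Qed.

Lemma dsbgs_expect1_sqres_le K x xs : A *m xs = b -> A != 0 -> 0 <= alpha ->
  blk_gain (resid x) <= K * vnorm2 (resid x) ->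
  dsbgs_expect A b alpha PI PJ 1 x sqres
  <= (1 - 2 * alpha * sigmarsq A / frob2 A + alpha ^+ 2 * K / frob2 A) * vnorm2 (resid x).
Proof.
move=> Axs A_neq0 alpha_ge0 gain_le; rewrite dsbgs_expect1_sqres //.
have F_gt0 : 0 < frob2 A by rewrite frob2_gt0.
have sigmar_le : sigmarsq A * vnorm2 (resid x) <= vnorm2 (A^T *m resid x).
  by rewrite -Axs -mulmxBr; exact: sigmarsq_mul_vnorm2_le.
have := ler_wpM2l (divr_ge0 alpha_ge0 (ltW F_gt0)) sigmar_le.
have := ler_wpM2l (divr_ge0 (exprn_ge0 2 alpha_ge0) (ltW F_gt0)) gain_le.
lra.
Qed.

End OneStep.

Lemma dsbgs_expect_le (R : realType) m n (A : 'M[R]_(m, n)) (b : 'cV[R]_m) (alpha : R)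
    (PI : {set {set 'I_m}}) (PJ : {set {set 'I_n}}) (f : 'cV[R]_n -> R) (c : R) :
  (forall x, 0 <= f x) ->
  (forall x, dsbgs_expect A b alpha PI PJ 1 x f <= c * f x) ->
  forall k x, dsbgs_expect A b alpha PI PJ k x f <= c ^+ k * f x.
Proof.
move=> f_ge0; wlog c_ge0 : c / 0 <= c => [base mean_le|mean_le].
  have [|c_lt0] := leP 0 c; first by move=> c_ge0; exact: base.
  (* a negative rate forces f = 0, for which the rate 0 works as well *)
  have f0 x : f x = 0.
    apply/eqP; rewrite eq_le f_ge0 andbT -(nmulr_rge0 _ c_lt0).
    apply: le_trans (mean_le x); apply: sumr_ge0 => I _; apply: sumr_ge0 => J _.
    exact: mulr_ge0 (blkprob_ge0 _ _ _) (f_ge0 _).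
  have mean0 y : dsbgs_expect A b alpha PI PJ 1 y f <= 0 * f y.
    by rewrite /= mul0r big1 // => I _; rewrite big1 // => J _; rewrite f0 mulr0.
  by move=> k x; have := base 0 (lexx 0) mean0 k x; rewrite f0 !mulr0.
elim=> [|k IHk] x /=; first by rewrite expr0 mul1r.
apply: le_trans (_ : _ <= \sum_(I in PI) \sum_(J in PJ)
    blkprob A I J * (c ^+ k * f (dsbgs_step A b alpha I J x))) _.
  apply: ler_sum => I _; apply: ler_sum => J _.
  by apply: ler_wpM2l; [exact: blkprob_ge0 | exact: IHk].
under eq_bigr do under eq_bigr do rewrite mulrCA.
under eq_bigr do rewrite -mulr_sumr.
rewrite -mulr_sumr exprSr -mulrA.
by apply: ler_wpM2l; [exact: exprn_ge0 | exact: mean_le].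
Qed.

Unset Implicit Arguments.
Theorem theorem4 (R : realType) (m n : nat) (A : 'M[R]_(m, n)) (b : 'cV[R]_m)
  (PI : {set {set 'I_m}}) (PJ : {set {set 'I_n}}) (alpha : R) (x0 : 'cV[R]_n) :
  A != 0 ->
  (exists x : 'cV[R]_n, A *m x = b) ->
  partition PI [set: 'I_m] ->
  partition PJ [set: 'I_n] ->
  let beta := dsbgs_beta A PI PJ in
  let rho := dsbgs_rho A PJ in
  let t := #|PJ| in
  let sr2 := sigmarsq A in
  let res := fun x : 'cV[R]_n => vnorm2 (A *m x - b) in
  (t = n ->
   0 < alpha -> alpha < 2 * sr2 / (beta * frob2 A) ->
   forall k : nat,
     dsbgs_expect A b alpha PI PJ k x0 res
       <= (1 + beta * alpha ^+ 2 - 2 * alpha * sr2 / frob2 A) ^+ k * res x0)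
  /\
  ((t < n)%N ->
   0 < alpha -> alpha < 2 * sr2 / (t%:R * rho * beta) ->
   forall k : nat,
     dsbgs_expect A b alpha PI PJ k x0 res
       <= (1 - (2 * alpha * sr2 - t%:R * rho * beta * alpha ^+ 2) / frob2 A) ^+ k
          * res x0).
Proof.
move=> A_neq0 [xs Axs] PI_part PJ_part beta rho t sr2 res.
have F_neq0 : frob2 A != 0 by rewrite frob2_eq0.
split=> [_ alpha_gt0 _ k | _ alpha_gt0 _ k];
  apply: dsbgs_expect_le => x; rewrite ?vnorm2_ge0 //.
- rewrite (_ : 1 + _ - _ = 1 - 2 * alpha * sr2 / frob2 A
                             + alpha ^+ 2 * (frob2 A * beta) / frob2 A); last by field.
  apply: (dsbgs_expect1_sqres_le PI_part PJ_part Axs) => //; first exact: ltW.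
  exact: blk_gain_le_frob2.
- rewrite (_ : 1 - _ = 1 - 2 * alpha * sr2 / frob2 A
                         + alpha ^+ 2 * (t%:R * rho * beta) / frob2 A); last by field.
  apply: (dsbgs_expect1_sqres_le PI_part PJ_part Axs) => //; first exact: ltW.
  exact: blk_gain_le_rho.
Qed.
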